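(* Consider $n$ buses with line susceptances $b_{il}=b_{li}\ge 0$ ($b_{ii}=0$; $b_{il}=0$ if there is no line), maximal voltage magnitudes $V_{\max,i}>0$, and an operating point $(V_0,\theta_0)\in\mathbb{R}^n\times\mathbb{R}^n$ satisfying Assumption A. Let $L_B$ be the matrix with entries $$L_{B,ij}=\frac{\partial}{\partial\theta_j}\sum_{l=1}^n V_{0,i}V_{0,l}b_{il}\sin(\theta_i-\theta_l)\Big|_{\theta=\theta_0},$$ let $\gamma_i:=2\sum_{j=1}^n V_{\max,i}V_{\max,j}b_{ij}$, assumed positive for all $i$, and $\Gamma=\operatorname{diag}(\gamma_1,\dots,\gamma_n)$. Then for any conformal partitioning (after a permutation of the bus indices) $$\Gamma=\begin{bmatrix}\Gamma_1&0\\0&\Gamma_2\end{bmatrix},\qquad L_B=\begin{bmatrix}L_{B,11}&L_{B,12}\\ L_{B,21}&L_{B,22}\end{bmatrix}$$ with $L_{B,22}$ invertible (the second block being allowed to be empty, in which case the Schur complement below is $L_B$ itself), $$0\preceq \Gamma_1^{-1/2}\big(L_{B,11}-L_{B,12}L_{B,22}^{-1}L_{B,21}\big)\Gamma_1^{-1/2}\preceq I.$$ In particular $\Gamma^{-1/2}L_B\Gamma^{-1/2}\in\mathcal{L}$.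
   Context: Assumption A: at the operating point, the angle difference $|\theta_{0,i}-\theta_{0,j}|$ across each transmission line (i.e. for each pair with $b_{ij}>0$) is less than $\pi/2$, and the voltage magnitude at each bus satisfies $0<V_{0,i}\le V_{\max,i}$. $\mathcal{L}:=\{L\in\mathbb{R}^{n\times n}: L=L^T,\ 0\preceq L\preceq I\}$. *)

From Stdlib Require Import Reals Lra.
Open Scope R_scope.

Fixpoint rsum (n : nat) (f : nat -> R) : R :=
  match n with
  | O => 0
  | S k => rsum k f + f k
  end.

Definition rsum_in (n : nat) (P : nat -> bool) (f : nat -> R) : R :=
  rsum n (fun k => if P k then f k else 0).

Definition upd (th : nat -> R) (j : nat) (t : R) : nat -> R :=
  fun k => if Nat.eqb k j then t else th k.

Definition Pinj (n : nat) (b : nat -> nat -> R) (V : nat -> R) (th : nat -> R) (i : nat) : R :=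
  rsum n (fun l => V i * V l * b i l * sin (th i - th l)).

Definition gam (n : nat) (b : nat -> nat -> R) (Vmax : nat -> R) (i : nat) : R :=
  2 * rsum n (fun j => Vmax i * Vmax j * b i j).

Definition kron (i j : nat) : R := if Nat.eqb i j then 1 else 0.

(* Schur complement entry L11 - L12 M L21 where M is the inverse of the block on S2 *)
Definition schur (n : nat) (S2 : nat -> bool) (L M : nat -> nat -> R) (i j : nat) : R :=
  L i j - rsum_in n S2 (fun k => rsum_in n S2 (fun l => L i k * M k l * L l j)).

Definition qform (n : nat) (P : nat -> bool) (g : nat -> R) (A : nat -> nat -> R)
  (x : nat -> R) : R :=
  rsum_in n P (fun i => rsum_in n P (fun j =>
     x i * (A i j / (sqrt (g i) * sqrt (g j))) * x j)).

Definition sqnorm (n : nat) (P : nat -> bool) (x : nat -> R) : R :=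
  rsum_in n P (fun i => x i * x i).

(* The Jacobian L_B is the Laplacian of the graph with edge weights
   w_il = V_i V_l b_il cos(theta_i - theta_l), which Assumption A makes
   nonnegative and bounded by Vmax_i Vmax_l b_il.  Hence
   2 u^T L_B u = sum_il w_il (u_i - u_l)^2 lies between 0 and
   sum_il w_il (2 u_i^2 + 2 u_l^2) <= sum_i gamma_i u_i^2.
   For the Schur complement, pick y on the eliminated block solving
   (L_B (z + y))_2 = 0; then z^T S z = (z + y)^T L_B (z + y) and
   z^T L_B z = z^T S z + y^T L_B y, so the same bounds pass to S. *)

From Stdlib Require Import Bool Reals Lra Lia.
Open Scope R_scope.

Lemma rsum_ext n f g : (forall k, (k < n)%nat -> f k = g k) -> rsum n f = rsum n g.
Proof.
  induction n as [|n IH]; intros H; simpl; [reflexivity|].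
  rewrite IH by (intros; apply H; lia); rewrite H by lia; reflexivity.
Qed.

Lemma rsum_eq0 n f : (forall k, (k < n)%nat -> f k = 0) -> rsum n f = 0.
Proof.
  induction n as [|n IH]; intros H; simpl; [reflexivity|].
  rewrite IH by (intros; apply H; lia); rewrite H by lia; ring.
Qed.

Lemma rsum_add n f g : rsum n (fun k => f k + g k) = rsum n f + rsum n g.
Proof. induction n as [|n IH]; simpl; [ring|rewrite IH; ring]. Qed.

Lemma rsum_sub n f g : rsum n (fun k => f k - g k) = rsum n f - rsum n g.
Proof. induction n as [|n IH]; simpl; [ring|rewrite IH; ring]. Qed.

Lemma rsum_opp n f : rsum n (fun k => - f k) = - rsum n f.
Proof. induction n as [|n IH]; simpl; [ring|rewrite IH; ring]. Qed.

Lemma rsum_mull n c f : rsum n (fun k => c * f k) = c * rsum n f.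
Proof. induction n as [|n IH]; simpl; [ring|rewrite IH; ring]. Qed.

Lemma rsum_swap n m f :
  rsum n (fun i => rsum m (fun j => f i j)) = rsum m (fun j => rsum n (fun i => f i j)).
Proof.
  induction n as [|n IH]; simpl.
  - symmetry; apply rsum_eq0; reflexivity.
  - rewrite IH, <- rsum_add; reflexivity.
Qed.

Lemma rsum_nonneg n f : (forall k, (k < n)%nat -> 0 <= f k) -> 0 <= rsum n f.
Proof.
  induction n as [|n IH]; intros H; simpl; [lra|].
  pose proof (H n ltac:(lia)); pose proof (IH ltac:(intros; apply H; lia)); lra.
Qed.

Lemma rsum_le n f g : (forall k, (k < n)%nat -> f k <= g k) -> rsum n f <= rsum n g.
Proof.
  induction n as [|n IH]; intros H; simpl; [lra|].
  pose proof (H n ltac:(lia)); pose proof (IH ltac:(intros; apply H; lia)); lra.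
Qed.

Lemma kron_comm i j : kron i j = kron j i.
Proof. unfold kron; rewrite Nat.eqb_sym; reflexivity. Qed.

Lemma rsum_kron n j f : (j < n)%nat -> rsum n (fun k => kron j k * f k) = f j.
Proof.
  induction n as [|n IH]; intros Hj; [lia|]; simpl; unfold kron at 2.
  destruct (Nat.eqb_spec j n) as [->|Hjn].
  - rewrite rsum_eq0; [ring|]. intros k Hk; unfold kron.
    destruct (Nat.eqb_spec n k); [lia|ring].
  - rewrite IH by lia; ring.
Qed.

Lemma rsum_symmetric_swap n (W : nat -> nat -> R) (F : nat -> nat -> R) :
  (forall i l, (i < n)%nat -> (l < n)%nat -> W i l = W l i) ->
  rsum n (fun i => rsum n (fun l => W i l * F i l))
  = rsum n (fun i => rsum n (fun l => W i l * F l i)).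
Proof.
  intros HW; rewrite rsum_swap.
  apply rsum_ext; intros i Hi; apply rsum_ext; intros l Hl; rewrite HW by assumption.
  reflexivity.
Qed.

Definition matvec n (A : nat -> nat -> R) (u : nat -> R) (i : nat) : R :=
  rsum n (fun j => A i j * u j).

Definition matmul n (A B : nat -> nat -> R) (i j : nat) : R :=
  rsum n (fun k => A i k * B k j).

Definition dot n (u w : nat -> R) : R := rsum n (fun i => u i * w i).

Definition quad n (A : nat -> nat -> R) (u : nat -> R) : R := dot n u (matvec n A u).

Definition symmetric n (A : nat -> nat -> R) : Prop :=
  forall i j, (i < n)%nat -> (j < n)%nat -> A i j = A j i.

Lemma dot_comm n u w : dot n u w = dot n w u.
Proof. apply rsum_ext; intros; ring. Qed.

Lemma dot_supported n (S : nat -> bool) u w w' :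
  (forall k, (k < n)%nat -> S k = false -> u k = 0) ->
  (forall k, (k < n)%nat -> S k = true -> w k = w' k) ->
  dot n u w = dot n u w'.
Proof.
  intros Hu Hw; apply rsum_ext; intros k Hk.
  destruct (S k) eqn:E; [rewrite Hw|rewrite Hu]; auto; ring.
Qed.

Lemma matvec_add n A u w i :
  matvec n A (fun k => u k + w k) i = matvec n A u i + matvec n A w i.
Proof. unfold matvec; rewrite <- rsum_add; apply rsum_ext; intros; ring. Qed.

Lemma matvec_ext n A u w i :
  (forall k, (k < n)%nat -> u k = w k) -> matvec n A u i = matvec n A w i.
Proof. intros H; apply rsum_ext; intros; rewrite H by assumption; reflexivity. Qed.

Lemma matvec_opp n A u i : matvec n A (fun k => - u k) i = - matvec n A u i.
Proof. unfold matvec; rewrite <- rsum_opp; apply rsum_ext; intros; ring. Qed.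

Lemma matvec_matmul n A B u i : matvec n (matmul n A B) u i = matvec n A (matvec n B u) i.
Proof.
  unfold matvec, matmul.
  transitivity (rsum n (fun j => rsum n (fun k => A i k * (B k j * u j)))).
  - apply rsum_ext; intros j _.
    rewrite (Rmult_comm _ (u j)), <- rsum_mull; apply rsum_ext; intros; ring.
  - rewrite rsum_swap; apply rsum_ext; intros; apply rsum_mull.
Qed.

Lemma dot_matvec_symmetric n A u w :
  symmetric n A -> dot n u (matvec n A w) = dot n (matvec n A u) w.
Proof.
  intros HA; unfold dot, matvec.
  transitivity (rsum n (fun i => rsum n (fun j => u i * A i j * w j))).
  - apply rsum_ext; intros; rewrite <- rsum_mull; apply rsum_ext; intros; ring.
  - rewrite rsum_swap; apply rsum_ext; intros j Hj.
    rewrite (Rmult_comm _ (w j)), <- rsum_mull.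
    apply rsum_ext; intros i Hi; rewrite (HA i j) by assumption; ring.
Qed.

Lemma quad_ext n A B u :
  (forall i j, (i < n)%nat -> (j < n)%nat -> A i j = B i j) -> quad n A u = quad n B u.
Proof.
  intros H; apply rsum_ext; intros i Hi; f_equal.
  apply rsum_ext; intros j Hj; rewrite H by assumption; reflexivity.
Qed.

Definition extend_block (S : nat -> bool) (M : nat -> nat -> R) (k l : nat) : R :=
  if S k && S l then M k l else 0.

Lemma schur_matmul n S L M i j :
  schur n S L M i j = L i j - matmul n L (matmul n (extend_block S M) L) i j.
Proof.
  unfold schur, rsum_in, matmul, extend_block; f_equal.
  apply rsum_ext; intros k _; rewrite <- rsum_mull.
  destruct (S k); simpl.
  - apply rsum_ext; intros l _; destruct (S l); ring.
  - symmetry; apply rsum_eq0; intros; ring.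
Qed.

Section SchurComplement.

Variables (n : nat) (S2 : nat -> bool) (L M : nat -> nat -> R).
Hypothesis L_sym : symmetric n L.
Hypothesis M_rinv : forall i j, (i < n)%nat -> (j < n)%nat -> S2 i = true -> S2 j = true ->
  rsum_in n S2 (fun k => L i k * M k j) = kron i j.

Lemma matmul_extend_block_rinv k l : (k < n)%nat -> (l < n)%nat -> S2 k = true ->
  matmul n L (extend_block S2 M) k l = kron k l.
Proof.
  intros Hk Hl Sk; unfold matmul, extend_block.
  destruct (S2 l) eqn:Sl.
  - rewrite <- M_rinv by assumption; apply rsum_ext; intros j _.
    destruct (S2 j); simpl; ring.
  - rewrite rsum_eq0; [|intros j _; rewrite andb_false_r; ring].
    unfold kron; destruct (Nat.eqb_spec k l); [congruence|reflexivity].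
Qed.

Lemma matvec_extend_block_rinv w k : (k < n)%nat -> S2 k = true ->
  matvec n L (matvec n (extend_block S2 M) w) k = w k.
Proof.
  intros Hk Sk; rewrite <- matvec_matmul; unfold matvec at 1.
  rewrite <- (rsum_kron n k w) by assumption.
  apply rsum_ext; intros l Hl; rewrite matmul_extend_block_rinv; auto.
Qed.

(* [z + correction z] is the extension of [z] that is L-harmonic on the
   eliminated block [S2]. *)
Definition correction (z : nat -> R) (k : nat) : R :=
  - matvec n (extend_block S2 M) (matvec n L z) k.

Lemma correction_supported z k : (k < n)%nat -> S2 k = false -> correction z k = 0.
Proof.
  intros _ Sk; unfold correction, matvec, extend_block.
  rewrite Sk, rsum_eq0; [ring|intros; simpl; ring].
Qed.

Lemma matvec_correction z k : (k < n)%nat -> S2 k = true ->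
  matvec n L (correction z) k = - matvec n L z k.
Proof.
  intros Hk Sk; unfold correction; rewrite matvec_opp, matvec_extend_block_rinv; auto.
Qed.

Lemma matvec_schur z i :
  matvec n (schur n S2 L M) z i = matvec n L (fun k => z k + correction z k) i.
Proof.
  transitivity (matvec n L z i - matvec n (matmul n L (matmul n (extend_block S2 M) L)) z i).
  { unfold matvec; rewrite <- rsum_sub; apply rsum_ext; intros; rewrite schur_matmul; ring. }
  rewrite matvec_add, matvec_matmul; unfold correction; rewrite matvec_opp.
  unfold Rminus; apply Rplus_eq_compat_l, Ropp_eq_compat, matvec_ext; intros; apply matvec_matmul.
Qed.

Lemma quad_schur_extension z :
  quad n (schur n S2 L M) z = quad n L (fun k => z k + correction z k).
Proof.
  set (x := fun k => z k + correction z k).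
  assert (Hharm : dot n (correction z) (matvec n L x) = 0).
  { rewrite (dot_supported n S2 _ _ (fun _ => 0)).
    - apply rsum_eq0; intros; ring.
    - apply correction_supported.
    - intros k Hk Sk; unfold x; rewrite matvec_add, matvec_correction by assumption; ring. }
  unfold quad at 2, dot; rewrite (rsum_ext n _ (fun i => z i * matvec n L x i
                                         + correction z i * matvec n L x i))
    by (intros; unfold x at 1; ring).
  rewrite rsum_add; fold (dot n z (matvec n L x)) (dot n (correction z) (matvec n L x)).
  rewrite Hharm, Rplus_0_r.
  apply rsum_ext; intros i _; rewrite matvec_schur; reflexivity.
Qed.

Lemma quad_schur_defect z :
  quad n L z = quad n (schur n S2 L M) z + quad n L (correction z).
Proof.
  assert (Hy : quad n L (correction z) = - dot n (correction z) (matvec n L z)).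
  { unfold quad; rewrite (dot_supported n S2 _ _ (fun k => - matvec n L z k)).
    - unfold dot; rewrite <- rsum_opp; apply rsum_ext; intros; ring.
    - apply correction_supported.
    - apply matvec_correction. }
  assert (Hz : dot n z (matvec n L (correction z)) = dot n (correction z) (matvec n L z)).
  { rewrite dot_matvec_symmetric by assumption; apply dot_comm. }
  assert (Hs : dot n z (matvec n L z) = dot n z (matvec n (schur n S2 L M) z)
                                      - dot n z (matvec n L (correction z))).
  { unfold dot; rewrite <- rsum_sub; apply rsum_ext; intros i _.
    rewrite matvec_schur, matvec_add; ring. }
  unfold quad at 1 2; lra.
Qed.

Lemma quad_schur_bounds : (forall u, 0 <= quad n L u) ->
  forall z, 0 <= quad n (schur n S2 L M) z <= quad n L z.
Proof.
  intros Hpsd z; rewrite quad_schur_defect, quad_schur_extension.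
  pose proof (Hpsd (fun k => z k + correction z k)); pose proof (Hpsd (correction z)); lra.
Qed.

End SchurComplement.

Definition laplacian n (W : nat -> nat -> R) (i j : nat) : R :=
  kron i j * rsum n (W i) - W i j.

Lemma laplacian_rsum n W i j : (j < n)%nat ->
  laplacian n W i j = rsum n (fun l => W i l * (kron i j - kron l j)).
Proof.
  intros Hj; unfold laplacian; symmetry.
  rewrite (rsum_ext n _ (fun l => kron i j * W i l - kron j l * W i l))
    by (intros l _; rewrite (kron_comm l j); ring).
  rewrite rsum_sub, rsum_mull, rsum_kron by assumption; reflexivity.
Qed.

Lemma matvec_laplacian n W u i : (i < n)%nat ->
  matvec n (laplacian n W) u i = rsum n (fun l => W i l * (u i - u l)).
Proof.
  intros Hi; unfold matvec, laplacian.
  rewrite (rsum_ext n _ (fun j => kron i j * (rsum n (W i) * u j) - W i j * u j))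
    by (intros; ring).
  rewrite rsum_sub, rsum_kron by assumption.
  rewrite (Rmult_comm _ (u i)), <- rsum_mull, <- rsum_sub; apply rsum_ext; intros; ring.
Qed.

Section Laplacian.

Variables (n : nat) (W : nat -> nat -> R).
Hypothesis W_sym : forall i l, (i < n)%nat -> (l < n)%nat -> W i l = W l i.
Hypothesis W_nonneg : forall i l, (i < n)%nat -> (l < n)%nat -> 0 <= W i l.

Lemma laplacian_symmetric : symmetric n (laplacian n W).
Proof.
  intros i j Hi Hj; unfold laplacian; rewrite (kron_comm i j), W_sym by assumption.
  unfold kron; destruct (Nat.eqb_spec j i) as [->|]; ring.
Qed.

Lemma quad_laplacian u :
  2 * quad n (laplacian n W) u = rsum n (fun i => rsum n (fun l => W i l * (u i - u l) ^ 2)).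
Proof.
  assert (Hq : quad n (laplacian n W) u
               = rsum n (fun i => rsum n (fun l => W i l * (u i * (u i - u l))))).
  { apply rsum_ext; intros i Hi; rewrite matvec_laplacian, <- rsum_mull by assumption.
    apply rsum_ext; intros; ring. }
  rewrite Hq; replace (2 * _) with
    (rsum n (fun i => rsum n (fun l => W i l * (u i * (u i - u l))))
     + rsum n (fun i => rsum n (fun l => W i l * (u l * (u l - u i))))).
  - rewrite <- rsum_add; apply rsum_ext; intros.
    rewrite <- rsum_add; apply rsum_ext; intros; ring.
  - rewrite <- (rsum_symmetric_swap n W (fun i l => u i * (u i - u l))) by assumption; ring.
Qed.

Lemma quad_laplacian_nonneg u : 0 <= quad n (laplacian n W) u.
Proof.
  assert (0 <= rsum n (fun i => rsum n (fun l => W i l * (u i - u l) ^ 2))).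
  { apply rsum_nonneg; intros; apply rsum_nonneg; intros.
    apply Rmult_le_pos; [auto|apply pow2_ge_0]. }
  pose proof (quad_laplacian u); lra.
Qed.

Lemma quad_laplacian_le_degree u :
  quad n (laplacian n W) u <= rsum n (fun i => 2 * rsum n (W i) * (u i * u i)).
Proof.
  assert (Hle : rsum n (fun i => rsum n (fun l => W i l * (u i - u l) ^ 2))
               <= rsum n (fun i => rsum n (fun l => W i l * (2 * (u i * u i) + 2 * (u l * u l))))).
  { apply rsum_le; intros i Hi; apply rsum_le; intros l Hl.
    apply Rmult_le_compat_l; [auto|]. pose proof (pow2_ge_0 (u i + u l)); lra. }
  assert (Hsplit : rsum n (fun i => rsum n (fun l => W i l * (2 * (u i * u i) + 2 * (u l * u l))))
                   = rsum n (fun i => rsum n (fun l => W i l * (2 * (u i * u i))))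
                     + rsum n (fun i => rsum n (fun l => W i l * (2 * (u l * u l))))).
  { rewrite <- rsum_add; apply rsum_ext; intros.
    rewrite <- rsum_add; apply rsum_ext; intros; ring. }
  rewrite <- (rsum_symmetric_swap n W (fun i l => 2 * (u i * u i))) in Hsplit by assumption.
  assert (Hdeg : rsum n (fun i => rsum n (fun l => W i l * (2 * (u i * u i))))
                 = rsum n (fun i => 2 * rsum n (W i) * (u i * u i))).
  { apply rsum_ext; intros i _.
    replace (2 * rsum n (W i) * (u i * u i)) with (2 * (u i * u i) * rsum n (W i)) by ring.
    rewrite <- rsum_mull; apply rsum_ext; intros; ring. }
  pose proof (quad_laplacian u); lra.
Qed.

End Laplacian.

Lemma upd_same th j k : upd th j (th j) k = th k.
Proof. unfold upd; destruct (Nat.eqb_spec k j) as [->|]; reflexivity. Qed.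

Lemma derivable_pt_lim_upd th j k :
  derivable_pt_lim (fun t => upd th j t k) (th j) (kron k j).
Proof.
  unfold upd, kron; destruct (k =? j)%nat.
  - apply derivable_pt_lim_id.
  - apply derivable_pt_lim_const.
Qed.

Lemma derivable_pt_lim_rsum m (f : nat -> R -> R) (d : nat -> R) x :
  (forall l, (l < m)%nat -> derivable_pt_lim (f l) x (d l)) ->
  derivable_pt_lim (fun t => rsum m (fun l => f l t)) x (rsum m d).
Proof.
  induction m as [|m IH]; intros H; simpl.
  - apply derivable_pt_lim_const.
  - apply (derivable_pt_lim_plus (fun t => rsum m (fun l => f l t)) (f m)).
    + apply IH; intros; apply H; lia.
    + apply H; lia.
Qed.

Definition flow_weight (b : nat -> nat -> R) (V th : nat -> R) (i l : nat) : R :=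
  V i * V l * b i l * cos (th i - th l).

Lemma derivable_pt_lim_Pinj n b V th i j : (j < n)%nat ->
  derivable_pt_lim (fun t => Pinj n b V (upd th j t) i) (th j)
    (laplacian n (flow_weight b V th) i j).
Proof.
  intros Hj; rewrite laplacian_rsum by assumption.
  apply derivable_pt_lim_rsum; intros l _.
  pose proof (derivable_pt_lim_minus _ _ _ _ _
                (derivable_pt_lim_upd th j i) (derivable_pt_lim_upd th j l)) as Hdiff.
  pose proof (derivable_pt_lim_scal _ (V i * V l * b i l) _ _
                (derivable_pt_lim_comp _ sin _ _ _ Hdiff (derivable_pt_lim_sin _))) as Hterm.
  unfold minus_fct, mult_real_fct, comp in Hterm; rewrite !upd_same in Hterm.
  unfold flow_weight.
  replace (V i * V l * b i l * cos (th i - th l) * (kron i j - kron l j))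
    with (V i * V l * b i l * (cos (th i - th l) * (kron i j - kron l j))) by ring.
  exact Hterm.
Qed.

Lemma flow_weight_bounds b V Vmax th i l :
  0 <= b i l -> (0 < b i l -> Rabs (th i - th l) < PI / 2) ->
  0 < V i <= Vmax i -> 0 < V l <= Vmax l ->
  0 <= flow_weight b V th i l <= Vmax i * Vmax l * b i l.
Proof.
  intros Hb Hang HVi HVl; unfold flow_weight.
  destruct (Rle_lt_or_eq_dec _ _ Hb) as [Hpos|Hzero].
  - pose proof (Rabs_def2 _ _ (Hang Hpos)) as Hth.
    assert (Hcos0 : 0 <= cos (th i - th l)) by (apply cos_ge_0; lra).
    pose proof (COS_bound (th i - th l)) as Hcos1.
    assert (Hp0 : 0 <= V i * V l * b i l) by (apply Rmult_le_pos; nra).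
    assert (Hp1 : V i * V l * b i l <= Vmax i * Vmax l * b i l)
      by (apply Rmult_le_compat_r; nra).
    split; nra.
  - rewrite <- Hzero; split; right; ring.
Qed.

Definition rescale (P : nat -> bool) (g x : nat -> R) (k : nat) : R :=
  if P k then x k / sqrt (g k) else 0.

Lemma qform_quad n P g A x : qform n P g A x = quad n A (rescale P g x).
Proof.
  unfold qform, rsum_in, quad, dot, matvec, rescale.
  apply rsum_ext; intros i _; destruct (P i); [|ring].
  rewrite <- rsum_mull; apply rsum_ext; intros j _.
  destruct (P j); [unfold Rdiv; rewrite Rinv_mult|]; ring.
Qed.

Lemma sqnorm_rescale n P g x : (forall i, (i < n)%nat -> 0 < g i) ->
  sqnorm n P x = rsum n (fun i => g i * (rescale P g x i * rescale P g x i)).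
Proof.
  intros Hg; unfold sqnorm, rsum_in, rescale.
  apply rsum_ext; intros i Hi; destruct (P i); [|ring].
  pose proof (Hg i Hi) as Hgi; pose proof (sqrt_lt_R0 _ Hgi).
  rewrite <- (sqrt_sqrt (g i)) at 1 by lra; field; lra.
Qed.

Lemma qform_bounds n P g A x : (forall i, (i < n)%nat -> 0 < g i) ->
  (forall z, 0 <= quad n A z <= rsum n (fun i => g i * (z i * z i))) ->
  0 <= qform n P g A x <= sqnorm n P x.
Proof.
  intros Hg HA; rewrite qform_quad, (sqnorm_rescale n P g x Hg); apply HA.
Qed.

Theorem lemma1 (n : nat) (b : nat -> nat -> R) (Vmax V0 th0 : nat -> R)
  (L : nat -> nat -> R)
  (Hbsym : forall i l, (i < n)%nat -> (l < n)%nat -> b i l = b l i)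
  (Hbnn : forall i l, (i < n)%nat -> (l < n)%nat -> 0 <= b i l)
  (Hbdiag : forall i, (i < n)%nat -> b i i = 0)
  (HVmax : forall i, (i < n)%nat -> 0 < Vmax i)
  (HAang : forall i j, (i < n)%nat -> (j < n)%nat -> 0 < b i j ->
             Rabs (th0 i - th0 j) < PI / 2)
  (HAV : forall i, (i < n)%nat -> 0 < V0 i <= Vmax i)
  (Hgam : forall i, (i < n)%nat -> 0 < gam n b Vmax i)
  (HL : forall i j, (i < n)%nat -> (j < n)%nat ->
          derivable_pt_lim (fun t => Pinj n b V0 (upd th0 j t) i) (th0 j) (L i j)) :
  (forall (S2 : nat -> bool) (M : nat -> nat -> R),
     (forall i j, (i < n)%nat -> (j < n)%nat -> S2 i = true -> S2 j = true ->
        rsum_in n S2 (fun k => L i k * M k j) = kron i j /\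
        rsum_in n S2 (fun k => M i k * L k j) = kron i j) ->
     forall x : nat -> R,
       let S1 := fun k => negb (S2 k) in
       0 <= qform n S1 (gam n b Vmax) (schur n S2 L M) x /\
       qform n S1 (gam n b Vmax) (schur n S2 L M) x <= sqnorm n S1 x)
  /\
  ((forall i j, (i < n)%nat -> (j < n)%nat ->
      L i j / (sqrt (gam n b Vmax i) * sqrt (gam n b Vmax j)) =
      L j i / (sqrt (gam n b Vmax j) * sqrt (gam n b Vmax i))) /\
   forall x : nat -> R,
     0 <= qform n (fun _ => true) (gam n b Vmax) L x /\
     qform n (fun _ => true) (gam n b Vmax) L x <= sqnorm n (fun _ => true) x).
Proof.
  set (g := gam n b Vmax); set (W := flow_weight b V0 th0).
  assert (HLW : forall i j, (i < n)%nat -> (j < n)%nat -> L i j = laplacian n W i j).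
  { intros i j Hi Hj; eapply uniqueness_limite; [apply HL|apply derivable_pt_lim_Pinj]; auto. }
  assert (HWsym : forall i l, (i < n)%nat -> (l < n)%nat -> W i l = W l i).
  { intros i l Hi Hl; unfold W, flow_weight; rewrite Hbsym by assumption.
    replace (th0 l - th0 i) with (- (th0 i - th0 l)) by ring; rewrite cos_neg; ring. }
  assert (HWb : forall i l, (i < n)%nat -> (l < n)%nat -> 0 <= W i l <= Vmax i * Vmax l * b i l).
  { intros i l Hi Hl; apply flow_weight_bounds; auto. }
  assert (Hdeg : forall i, (i < n)%nat -> 2 * rsum n (W i) <= g i).
  { intros i Hi; apply Rmult_le_compat_l; [lra|]; apply rsum_le; intros; apply HWb; auto. }
  assert (HLsym : symmetric n L).
  { intros i j Hi Hj; rewrite !HLW by assumption; apply laplacian_symmetric; auto. }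
  assert (HLbounds : forall z, 0 <= quad n L z <= rsum n (fun i => g i * (z i * z i))).
  { intros z; rewrite (quad_ext n L (laplacian n W)) by assumption; split.
    - apply quad_laplacian_nonneg; auto; apply HWb.
    - eapply Rle_trans; [apply quad_laplacian_le_degree; auto; apply HWb|].
      apply rsum_le; intros i Hi; apply Rmult_le_compat_r; [nra|auto]. }
  split; [|split].
  - intros S2 M HM x S1; apply qform_bounds; [assumption|]; intros z.
    pose proof (quad_schur_bounds n S2 L M HLsym (fun i j Hi Hj Si Sj => proj1 (HM i j Hi Hj Si Sj))
                  (fun u => proj1 (HLbounds u)) z).
    pose proof (HLbounds z); lra.
  - intros i j Hi Hj; rewrite HLsym, (Rmult_comm (sqrt (g i))) by assumption; reflexivity.
  - intros x; apply qform_bounds; assumption.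
Qed.
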